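(* For a plane binary tree $t$ with $k$ nodes, let $S_t(z)$ be the exponential generating function of plane increasing binary trees having no fringe subtree of shape $t$, and let $\tilde\rho$ be its dominant singularity. Then for every $\delta>0$ the following holds: if $k$ is sufficiently large, then $S_t(z)$ has no singularity in the domain \[ \tilde\rho < |z| < 1 + \frac{(2-\delta)\ln k}{k}. \]
   Context: A plane binary tree is a rooted tree in which each node has a left and a right slot, each empty or holding a subtree. A plane increasing binary tree of size $n$ is such a tree whose $n$ nodes are labeled $1,\dots,n$ increasingly along every path from the root. A fringe subtree is a node with all its descendants; its shape is obtained by forgetting labels. For $t$ with $k$ nodes, $w(t)=\ell(t)/k!$ where $\ell(t)$ is the number of increasing labelings of $t$. $S_t$ is the power series solution of $S_t'=(1+S_t)^2-w(t)kz^{k-1}$, $S_t(0)=0$; one has $S_t=-u'/u$ with $u$ the entire solution of $u''-2u'+(1-w(t)kz^{k-1})u=0$, $u(0)=-1$, $u'(0)=0$, and $\tilde\rho>1$ is the smallest positive zero of $u$. *)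

From mathcomp Require Import all_boot.

Set Implicit Arguments.
Unset Strict Implicit.
Unset Printing Implicit Defensive.

Inductive btree : Type := Leaf | Node of btree & btree.

Fixpoint bsize (t : btree) : nat :=
  match t with Leaf => 0 | Node l r => (bsize l + bsize r).+1 end.

(* Nodes of t are numbered 0..bsize t - 1 in preorder, starting at offset o.
   parent_edges o t lists the (parent, child) pairs of node numbers. *)
Fixpoint parent_edges (o : nat) (t : btree) : seq (nat * nat) :=
  match t with
  | Leaf => [::]
  | Node l r =>
      let lo := o.+1 in
      let ro := o.+1 + bsize l in
      (if l is Node _ _ then [:: (o, lo)] else [::]) ++
      (if r is Node _ _ then [:: (o, ro)] else [::]) ++
      parent_edges lo l ++ parent_edges ro r
  end.

(* An increasing labeling of t: a bijection f from the nodes {0..k-1} (preorder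
   numbering) to the labels {0..k-1} (i.e. labels 1..k shifted by one) such that
   labels increase along every parent->child edge, hence along every path from
   the root. *)
Definition increasing_labeling (t : btree) (f : {ffun 'I_(bsize t) -> 'I_(bsize t)}) : bool :=
  injectiveb f &&
  [forall i : 'I_(bsize t), forall j : 'I_(bsize t),
     (((i : nat), (j : nat)) \in parent_edges 0 t) ==> (f i < f j)].

Definition nlabelings (t : btree) : nat :=
  #|[pred f : {ffun 'I_(bsize t) -> 'I_(bsize t)} | increasing_labeling f]|.

(* With c = k w(t), the function g(z) = e^(-z) u(z) solves g'' = c z^(k-1) g, g(0) = -1,
   g'(0) = 1.  Integrating along segments from 0, as long as |z| <= r the solution stays within
   O(c r^k / k) of z - 1 and g' stays within O(c r^k / k) of 1.  In an increasing labeling the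
   root carries the smallest label, and the root of the larger subtree the smallest label of that
   subtree, whence c <= 2/(k-1).  For r = 1 + (2 - delta) ln k / k we get r^k <= k^(2-delta), so
   c r^k / k = O(k^-delta): every zero of u in |z| <= r lies within O(1/k) of 1, where g' is close
   to 1 and g is therefore injective.  So rho~ is the only zero of u in that disc. *)

From Stdlib Require Import Reals Factorial Lra Lia.
From Coquelicot Require Import Coquelicot.

Module LabelingCount.
From mathcomp Require Import all_boot perm zify.
Set Implicit Arguments. Unset Strict Implicit. Unset Printing Implicit Defensive.
Open Scope nat_scope.

Lemma parent_edges_lt o t i j :
  (i, j) \in parent_edges o t -> i < o + bsize t /\ j < o + bsize t.
Proof.
elim: t o => [|l IHl r IHr] o //=.
rewrite !mem_cat => /orP [|/orP [|/orP []]].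
- by case: l {IHl} => //= ? ?; rewrite inE => /eqP [-> ->]; lia.
- by case: r {IHr} => //= ? ?; rewrite inE => /eqP [-> ->]; lia.
- by move/IHl; lia.
- by move/IHr; lia.
Qed.

Lemma edge_increasing_root_min (F : nat -> nat) o t :
  (forall i j, (i, j) \in parent_edges o t -> F i < F j) ->
  forall j, o <= j < o + bsize t -> F o <= F j.
Proof.
elim: t o => [|l IHl r IHr] o incF j /= j_in; first lia.
have [-> //|j_neq_o] := eqVneq j o.
have [j_l|j_r] := leqP j (o + bsize l).
- have l_gt0 : 0 < bsize l by lia.
  have edge : (o, o.+1) \in parent_edges o (Node l r).
    by case: (l) l_gt0 => //= ? ? _; rewrite inE eqxx.
  apply: leq_trans (ltnW (incF _ _ edge)) (IHl _ _ _ _); last lia.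
  by move=> i k e; apply: incF; rewrite /= !mem_cat e !orbT.
- have r_gt0 : 0 < bsize r by lia.
  have edge : (o, o.+1 + bsize l) \in parent_edges o (Node l r).
    by case: (r) r_gt0 => //= ? ? _; rewrite !mem_cat inE eqxx orbT.
  apply: leq_trans (ltnW (incF _ _ edge)) (IHr _ _ _ _); last lia.
  by move=> i k e; apply: incF; rewrite /= !mem_cat e !orbT.
Qed.

(* (f, x, y) |-> tperm ord0 x \o f \o tperm b y is injective: x is its value at r, where f is 0,
   and y is where its minimum over B is attained. *)
Lemma card_min_root_min_block n (r b : 'I_n.+1) (B : {set 'I_n.+1})
    (A : {pred {ffun 'I_n.+1 -> 'I_n.+1}}) :
  r \notin B -> b \in B ->
  (forall f, f \in A -> injective f) ->
  (forall f, f \in A -> forall j, f r <= f j) ->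
  (forall f, f \in A -> forall j, j \in B -> f b <= f j) ->
  #|A| * (n.+1 * #|B|) <= n.+1`!.
Proof.
move=> r_notin_B b_in_B injA rootA blockA.
have root_label0 f : f \in A -> f r = ord0.
  move=> Af; have [g fK gK] := injF_bij (injA f Af).
  apply/val_inj/eqP; rewrite /= -leqn0.
  by apply: leq_trans (rootA f Af (g ord0)) _; rewrite gK.
have fix_r j : j \in B -> tperm b j r = r.
  by move=> jB; apply: tpermD; apply: contraNneq r_notin_B => <-.
have tperm_B y j : y \in B -> j \in B -> tperm b y j \in B by move=> yB jB; case: tpermP.
pose Phi (p : {ffun 'I_n.+1 -> 'I_n.+1} * ('I_n.+1 * 'I_n.+1)) : {ffun 'I_n.+1 -> 'I_n.+1} :=
  [ffun i => tperm ord0 p.2.1 (p.1 (tperm b p.2.2 i))].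
pose D := setX [set f in A] (setX [set: 'I_n.+1] B).
have cardD : #|D| = #|A| * (n.+1 * #|B|) by rewrite !cardsX cardsE cardsT card_ord.
have card_inj : #|[set f : {ffun 'I_n.+1 -> 'I_n.+1} | injectiveb f]| = n.+1`!.
  by rewrite card_inj_ffuns card_ord ffactnn.
rewrite -cardD -card_inj -(@card_in_imset _ _ Phi) /D.
  apply/subset_leq_card/subsetP => _ /imsetP [[f [x y]] /[!inE] /andP [Af _] ->].
  by apply/injectiveP => i j; rewrite !ffunE => /perm_inj /(injA f Af) /perm_inj.
move=> [f [x y]] [f' [x' y']] /[!inE] /and3P [Af _ yB] /and3P [Af' _ y'B] /ffunP PhiE.
have xE : x = x' by have := PhiE r; rewrite !ffunE /= !fix_r // !root_label0 // !tpermL.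
subst x'.
have hE i : f (tperm b y i) = f' (tperm b y' i) by have := PhiE i; rewrite !ffunE => /perm_inj.
have yE : y = y'.
  have le_f := blockA f Af _ (tperm_B _ _ yB y'B).
  have le_f' := blockA f' Af' _ (tperm_B _ _ y'B yB).
  have := hE y; have := hE y'; rewrite !tpermR => hy' hy.
  apply: (inj_comp (injA f Af) (@perm_inj _ (tperm b y))) => /=.
  by apply/val_inj/eqP; rewrite tpermR eqn_leq le_f hy' hy le_f'.
subst y'.
suff -> : f = f' by [].
by apply/ffunP => i; rewrite -(tpermK b y i) hE.
Qed.

Lemma increasing_labeling_edge l r
    (f : {ffun 'I_(bsize (Node l r)) -> 'I_(bsize (Node l r))}) :
  increasing_labeling f ->
  forall i j, (i, j) \in parent_edges 0 (Node l r) -> f (inord i) < f (inord j).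
Proof.
case/andP=> _ /forallP incf i j e; have [i_lt j_lt] := parent_edges_lt e.
by have /forallP/(_ (inord j))/implyP := incf (inord i); rewrite !inordK //; apply.
Qed.

Lemma nlabelings_subtree_le l r o s :
  0 < o -> o + bsize s <= bsize (Node l r) ->
  {subset parent_edges o s <= parent_edges 0 (Node l r)} ->
  nlabelings (Node l r) * (bsize (Node l r) * bsize s) <= (bsize (Node l r))`!.
Proof.
move=> o_gt0 /= s_le sub_s; set n := bsize l + bsize r.
have [s0|s_gt0] := posnP (bsize s); first by rewrite s0 !muln0.
pose B := [set (inord (o + i) : 'I_n.+1) | i : 'I_(bsize s)].
have cardB : #|B| = bsize s.
  rewrite card_imset ?card_ord // => i j /(congr1 val) /=.
  by rewrite !inordK; [move/addnI/val_inj | have := ltn_ord j; lia | have := ltn_ord i; lia].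
rewrite -cardB; apply: (@card_min_root_min_block n ord0 (inord o)).
- apply/imsetP => -[i _ /(congr1 val) /=]; rewrite inordK; have := ltn_ord i; lia.
- by apply/imsetP; exists (Ordinal s_gt0); rewrite ?addn0.
- by move=> f /andP [/injectiveP].
- move=> f /increasing_labeling_edge incf j.
  have := @edge_increasing_root_min (fun m => f (inord m)) 0 (Node l r) incf j.
  have -> : inord 0 = ord0 :> 'I_n.+1 by apply: val_inj; rewrite /= inordK.
  by rewrite inord_val; apply; rewrite leq0n add0n ltn_ord.
- move=> f /increasing_labeling_edge incf _ /imsetP [i _ ->].
  apply: (@edge_increasing_root_min (fun m => f (inord m)) o s) => [? ? /sub_s|].
    exact: incf.
  by rewrite leq_addr ltn_add2l ltn_ord.
Qed.

Lemma nlabelings_max_subtree_le l r :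
  nlabelings (Node l r) * (bsize (Node l r) * maxn (bsize l) (bsize r))
    <= (bsize (Node l r))`!.
Proof.
have [r_le_l|l_lt_r] := leqP (bsize r) (bsize l).
- apply: (@nlabelings_subtree_le l r 1 l) => //=; first lia.
  by move=> e e_l; rewrite !mem_cat e_l !orbT.
- apply: (@nlabelings_subtree_le l r (1 + bsize l) r) => //=.
  by move=> e e_r; rewrite !mem_cat e_r !orbT.
Qed.

Lemma fact_factorial n : fact n = n`!.
Proof. by elim: n => //= n IHn; rewrite factS IHn. Qed.

Lemma nlabelings_mul_le_fact t : exists2 s,
  (bsize t <= 2 * s + 1)%coq_nat & (nlabelings t * (bsize t * s) <= fact (bsize t))%coq_nat.
Proof.
case: t => [|l r]; first by exists 0; apply/leP; rewrite ?muln0.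
exists (maxn (bsize l) (bsize r)); apply/leP; first by rewrite /=; lia.
by rewrite fact_factorial nlabelings_max_subtree_le.
Qed.
End LabelingCount.

From Corelib Require Import ssreflect ssrbool.
Open Scope R_scope.

Lemma labeling_weight_bounds t : (2 <= bsize t)%nat ->
  0 <= INR (nlabelings t) / INR (fact (bsize t)) * INR (bsize t) <= 2 / (INR (bsize t) - 1).
Proof.
move=> k_ge2; have [s k_le count_le] := LabelingCount.nlabelings_mul_le_fact t.
move: k_ge2 k_le count_le; set k := bsize t => k_ge2 k_le count_le.
have k_ge : 2 <= INR k by apply: (le_INR 2).
have s_ge : INR k - 1 <= 2 * INR s by have := le_INR _ _ k_le; rewrite plus_INR mult_INR /=; lra.
have count : INR (nlabelings t) * (INR k * INR s) <= INR (fact k).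
  by rewrite -!mult_INR; apply: le_INR.
have fact_pos : 0 < INR (fact k) by apply: lt_0_INR; apply: lt_O_fact.
move: count; have := pos_INR (nlabelings t); have := pos_INR s.
set x := INR (nlabelings t) => s_ge0 x_ge0 count.
split; first by apply: Rmult_le_pos; [apply: Rdiv_le_0_compat |]; lra.
rewrite /Rdiv; apply: (Rmult_le_reg_r (INR (fact k) * (INR k - 1))); first nra.
rewrite (_ : x * / INR (fact k) * INR k * (INR (fact k) * (INR k - 1)) = x * INR k * (INR k - 1));
  last by field; lra.
rewrite (_ : 2 * / (INR k - 1) * (INR (fact k) * (INR k - 1)) = 2 * INR (fact k));
  last by field; lra.
have : 0 <= x * INR k by nra.
nra.
Qed.

Lemma is_derive_continuity_pt (f : R -> R) x l : is_derive f x l -> continuity_pt f x.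
Proof. by move=> df; apply/derivable_continuous_pt/ex_derive_Reals_0; exists l. Qed.

Lemma Rabs_increment_le (f f' b b' : R -> R) s0 : 0 <= s0 ->
  (forall s, is_derive f s (f' s)) -> (forall s, is_derive b s (b' s)) ->
  (forall s, 0 <= s <= s0 -> Rabs (f' s) <= b' s) ->
  Rabs (f s0 - f 0) <= b s0 - b 0.
Proof.
move=> s0_ge0 df db f'_le.
have nonincr (h h' : R -> R) : (forall s, is_derive h s (h' s)) ->
    (forall s, 0 <= s <= s0 -> h' s <= 0) -> h s0 - h 0 <= 0.
  move=> dh h'_le.
  have [||s [s_in ->]] := MVT_gen h 0 s0 h'.
  - by move=> s _; apply: dh.
  - by move=> s _; apply: is_derive_continuity_pt (dh s).
  rewrite Rmin_left ?Rmax_right // in s_in.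
  by have := h'_le s s_in; nra.
have := nonincr (fun s => f s - b s) (fun s => f' s - b' s).
have := nonincr (fun s => - f s - b s) (fun s => - f' s - b' s).
have dfb s := is_derive_minus _ _ _ _ _ (df s) (db s).
have dfb' s := is_derive_minus _ _ _ _ _ (is_derive_opp _ _ _ (df s)) (db s).
move=> /(_ dfb') decr_neg /(_ dfb) decr_pos; apply: Rabs_le; split.
- suff: - f s0 - b s0 - (- f 0 - b 0) <= 0 by lra.
  by apply: decr_neg => s /f'_le; have := Rabs_Ropp (f' s); have := Rle_abs (- f' s); lra.
- suff: f s0 - b s0 - (f 0 - b 0) <= 0 by lra.
  by apply: decr_pos => s /f'_le; have := Rle_abs (f' s); lra.
Qed.

Definition is_derive_RC (p : R -> C) (s : R) (l : C) : Prop :=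
  is_derive (fun t => Re (p t)) s (Re l) /\ is_derive (fun t => Im (p t)) s (Im l).

Lemma im_le_Cmod (z : C) : Rabs (Im z) <= Cmod z.
Proof. exact: Rle_trans (Rmax_r _ _) (Rmax_Cmod z). Qed.

Lemma Cmod_increment_le (p p' : R -> C) (b b' : R -> R) s0 : 0 <= s0 ->
  (forall s, is_derive_RC p s (p' s)) -> (forall s, is_derive b s (b' s)) ->
  (forall s, 0 <= s <= s0 -> Cmod (p' s) <= b' s) ->
  Cmod (p s0 - p 0) <= 2 * (b s0 - b 0).
Proof.
move=> s0_ge0 dp db p'_le.
have re_le := Rabs_increment_le (fun s => Re (p s)) (fun s => Re (p' s)) b b' s0 s0_ge0
  (fun s => proj1 (dp s)) db (fun s s_in => Rle_trans _ _ _ (re_le_Cmod _) (p'_le s s_in)).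
have im_le := Rabs_increment_le (fun s => Im (p s)) (fun s => Im (p' s)) b b' s0 s0_ge0
  (fun s => proj2 (dp s)) db (fun s s_in => Rle_trans _ _ _ (im_le_Cmod _) (p'_le s s_in)).
have sqrt2_le : sqrt 2 <= 2 by have := sqrt_sqrt 2 ltac:(lra); have := sqrt_pos 2; nra.
apply: Rle_trans (Cmod_2Rmax _) (Rmult_le_compat _ _ _ _ (sqrt_pos 2) _ sqrt2_le _).
- exact: Rle_trans (Rabs_pos _) (Rmax_l _ _).
- exact: Rmax_lub re_le im_le.
Qed.

Lemma Cmod_increment_le_pow (p p' : R -> C) (A : R) (n : nat) s0 : 0 <= s0 ->
  (forall s, is_derive_RC p s (p' s)) ->
  (forall s, 0 <= s <= s0 -> Cmod (p' s) <= A * s ^ n) ->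
  Cmod (p s0 - p 0) <= 2 * A * s0 ^ S n / INR (S n).
Proof.
move=> s0_ge0 dp p'_le.
have n1_pos : 0 < INR (S n) by apply: lt_0_INR; lia.
apply: Rle_trans
  (Cmod_increment_le p p' (fun s => A * s ^ S n / INR (S n)) _ s0 s0_ge0 dp _ p'_le) _.
- by move=> s; auto_derive => //; rewrite -/(INR (S n)); field; lra.
- by rewrite pow_i; [right; field; lra | lia].
Qed.

Lemma is_derive_RC_ext (p q : R -> C) s l :
  (forall t, p t = q t) -> is_derive_RC p s l -> is_derive_RC q s l.
Proof.
by move=> pq [dre dim]; split; [move: dre | move: dim]; apply: is_derive_ext => t; rewrite pq.
Qed.

Lemma is_derive_RC_const (z : C) s : is_derive_RC (fun _ => z) s 0.
Proof. by split; apply: is_derive_const. Qed.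

Lemma is_derive_RC_scal (z : C) s : is_derive_RC (fun t => t * z)%C s z.
Proof.
by case: z => x y; split; rewrite /=; auto_derive => //; ring.
Qed.

Lemma is_derive_RC_minus (p q : R -> C) s l1 l2 :
  is_derive_RC p s l1 -> is_derive_RC q s l2 -> is_derive_RC (fun t => p t - q t)%C s (l1 - l2)%C.
Proof. by case=> dp1 dp2 [dq1 dq2]; split; apply: is_derive_minus. Qed.

Lemma is_derive_RC_mult (p q : R -> C) s l1 l2 :
  is_derive_RC p s l1 -> is_derive_RC q s l2 ->
  is_derive_RC (fun t => p t * q t)%C s (l1 * q s + p s * l2)%C.
Proof.
case=> dp1 dp2 [dq1 dq2]; split.
- have -> : Re (l1 * q s + p s * l2) =
    (Re l1 * Re (q s) + Re (p s) * Re l2) - (Im l1 * Im (q s) + Im (p s) * Im l2).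
    by rewrite re_plus !re_mult; ring.
  exact: is_derive_minus (Derive.is_derive_mult _ _ _ _ _ dp1 dq1)
                         (Derive.is_derive_mult _ _ _ _ _ dp2 dq2).
- have -> : Im (l1 * q s + p s * l2) =
    (Re l1 * Im (q s) + Re (p s) * Im l2) + (Im l1 * Re (q s) + Im (p s) * Re l2).
    by rewrite im_plus !im_mult; ring.
  exact: is_derive_plus (Derive.is_derive_mult _ _ _ _ _ dp1 dq2)
                        (Derive.is_derive_mult _ _ _ _ _ dp2 dq1).
Qed.

Definition cexp (w : C) : C := (exp (Re w) * cos (Im w), exp (Re w) * sin (Im w)).

Lemma cexp_0 : cexp 0 = 1.
Proof. by rewrite /cexp /= exp_0 cos_0 sin_0 Rmult_1_r Rmult_0_r. Qed.

Lemma is_derive_RC_cexp (a d : C) s :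
  is_derive_RC (fun t => cexp (a + t * d))%C s (d * cexp (a + s * d))%C.
Proof.
by case: a d => [a1 a2] [d1 d2]; split; rewrite /cexp /=; auto_derive => //; rewrite /Rminus; ring.
Qed.

Lemma is_derive_RC_intro (p : R -> C) s l :
  (forall eps, 0 < eps -> exists delta : posreal, forall h, Rabs h < delta ->
     Cmod (p (s + h)%R - p s - h * l)%C <= eps * Rabs h) ->
  is_derive_RC p s l.
Proof.
move=> small.
have proj_derive (pr : C -> R) : (forall z, Rabs (pr z) <= Cmod z) ->
    (forall z w, pr (z - w)%C = pr z - pr w) -> (forall (h : R) z, pr (h * z)%C = h * pr z) ->
    is_derive (fun t => pr (p t)) s (pr l).
  move=> pr_le pr_minus pr_scal; apply/is_derive_Reals => eps eps_pos.
  have [delta near] := small (eps / 2) ltac:(lra).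
  exists delta => h h_neq0 h_lt; have h_pos : 0 < Rabs h by apply: Rabs_pos_lt.
  have -> : (pr (p (s + h)) - pr (p s)) / h - pr l = pr (p (s + h)%R - p s - h * l)%C / h.
    by rewrite !pr_minus pr_scal; field.
  rewrite Rabs_div //; apply/Rlt_div_l => //.
  have := Rle_trans _ _ _ (pr_le _) (near h h_lt); nra.
by split; apply: proj_derive; [exact: re_le_Cmod | by [] | exact: re_scal_l
                              | exact: im_le_Cmod | by [] | exact: im_scal_l].
Qed.

Lemma is_derive_C_linear_approx (f : C -> C) z l : is_derive f z l ->
  forall eps, 0 < eps -> exists delta : posreal, forall y, Cmod (y - z) < delta ->
    Cmod (f y - f z - (y - z) * l)%C <= eps * Cmod (y - z).
Proof.
case=> _ /(_ z (fun P zP => zP)) small eps eps_pos.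
have [delta near] := small (mkposreal eps eps_pos).
by exists delta => y yz; apply: near.
Qed.

Lemma is_derive_RC_ray (f : C -> C) (a d : C) (s : R) l :
  is_derive f (a + s * d)%C l -> is_derive_RC (fun t => f (a + t * d))%C s (d * l)%C.
Proof.
move/is_derive_C_linear_approx=> small; apply: is_derive_RC_intro => eps eps_pos.
have d_pos : 0 < Cmod d + 1 by have := Cmod_ge_0 d; lra.
have [delta near] := small (eps / (Cmod d + 1)) (Rdiv_lt_0_compat _ _ eps_pos d_pos).
exists (mkposreal _ (Rdiv_lt_0_compat _ _ (cond_pos delta) d_pos)) => h /= h_lt.
have step : (a + RtoC (s + h) * d - (a + s * d) = h * d)%C by rewrite RtoC_plus; ring.
have := near (a + RtoC (s + h) * d)%C; rewrite step Cmod_mult Cmod_R -Cmult_assoc => le_eps.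
have := Cmod_ge_0 d; have := Rabs_pos h => h_ge0 d_ge0.
apply: Rle_trans (le_eps _) _.
- have := Rmult_lt_compat_r _ _ _ d_pos h_lt.
  by rewrite /Rdiv Rmult_assoc Rinv_l; nra.
- have eps_eq : eps / (Cmod d + 1) * (Cmod d + 1) = eps by field; lra.
  have := Rdiv_lt_0_compat _ _ eps_pos d_pos.
  by rewrite -[X in _ <= X * _]eps_eq; nra.
Qed.

Lemma is_derive_RC_continuity_Cmod (p : R -> C) s l :
  is_derive_RC p s l -> continuity_pt (fun t => Cmod (p t)) s.
Proof.
case=> dre dim.
apply: (continuity_pt_comp (fun t => Re (p t) ^ 2 + Im (p t) ^ 2) sqrt).
- exact: is_derive_continuity_pt
    (is_derive_plus _ _ _ _ _ (is_derive_pow _ 2 _ _ dre) (is_derive_pow _ 2 _ _ dim)).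
- by apply: continuity_pt_sqrt; apply: Rplus_le_le_0_compat; apply: pow2_ge_0.
Qed.

Lemma near_identity_injective (G G' : C -> C) (z0 : C) (eta q : R) :
  (forall a d s, is_derive_RC (fun t => G (a + t * d))%C s (d * G' (a + s * d))%C) ->
  q < / 2 -> (forall w, Cmod (w - z0) <= eta -> Cmod (G' w - 1) <= q) ->
  forall z1 z2, Cmod (z1 - z0) <= eta -> Cmod (z2 - z0) <= eta -> G z1 = G z2 -> z1 = z2.
Proof.
move=> dG q_lt G'_near z1 z2 z1_near z2_near Gz; set d := (z1 - z2)%C.
have := Cmod_increment_le_pow (fun t => G (z2 + t * d) - t * d)%C
  (fun s => d * G' (z2 + s * d) - d)%C (Cmod d * q) 0 1 ltac:(lra).
have -> : (z2 + 1 * d = z1)%C by rewrite /d; ring.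
have -> : (z2 + 0 * d = z2)%C by ring.
rewrite Gz (_ : G z2 - 1 * d - (G z2 - 0 * d) = - d)%C; last by ring.
rewrite Cmod_opp pow1 /= => H.
have : Cmod d <= 2 * q * Cmod d.
  apply: Rle_trans (H _ _) (Req_le _ _ _); last by field.
  - by move=> s; apply: is_derive_RC_minus (dG z2 d s) (is_derive_RC_scal d s).
  move=> s s_in; rewrite (_ : d * G' (z2 + s * d) - d = d * (G' (z2 + s * d) - 1))%C; last by ring.
  rewrite Cmod_mult Rmult_1_r; apply: Rmult_le_compat_l (Cmod_ge_0 d) (G'_near _ _).
  rewrite (_ : z2 + s * d - z0 = RtoC (1 - s) * (z2 - z0) + s * (z1 - z0))%C;
    last by rewrite /d RtoC_minus; ring.
  apply: Rle_trans (Cmod_triangle _ _) _; rewrite !Cmod_mult !Cmod_R !Rabs_pos_eq; nra.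
have := Cmod_ge_0 d => d_ge0 d_le.
have /Cmod_eq_0 d0 : Cmod d = 0 by nra.
exact/Ceq_minus.
Qed.

Lemma Cmod_pow_n (z : C) n : Cmod (pow_n z n) = Cmod z ^ n.
Proof. by elim: n => [|n IHn] /=; [exact: Cmod_1 | rewrite -IHn; exact: Cmod_mult]. Qed.

Lemma pow_le_exp x n : 0 <= 1 + x -> (1 + x) ^ n <= exp (INR n * x).
Proof.
move=> x_ge; elim: n => [|n IHn]; first by rewrite /= Rmult_0_l exp_0; lra.
rewrite S_INR Rmult_plus_distr_r Rmult_1_l exp_plus /=.
have := exp_ineq1_le x; have := exp_pos x; have := pow_le _ n x_ge; nra.
Qed.

Section DampedSolution.
Variables (u u1 u2 : C -> C) (c : R) (k : nat).
Hypothesis du : forall z, is_derive u z (u1 z).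
Hypothesis du1 : forall z, is_derive u1 z (u2 z).
Hypothesis ode : forall z : C,
  Cplus (Cminus (u2 z) (Cmult (RtoC 2) (u1 z)))
        (Cmult (Cminus (RtoC 1) (Cmult (RtoC c) (pow_n z (k - 1)%nat))) (u z)) = RtoC 0.
Hypothesis u_0 : u (RtoC 0) = RtoC (-1).
Hypothesis u1_0 : u1 (RtoC 0) = RtoC 0.
Hypothesis c_ge0 : 0 <= c.
Hypothesis k_gt0 : (0 < k)%nat.

Definition g (w : C) : C := (cexp (- w) * u w)%C.
Definition g' (w : C) : C := (cexp (- w) * (u1 w - u w))%C.

Lemma g_ray (a d : C) s : is_derive_RC (fun t => g (a + t * d))%C s (d * g' (a + s * d))%C.
Proof.
have neg (t : R) : (- (a + t * d) = - a + t * - d)%C by ring.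
apply: (is_derive_RC_ext (fun t => cexp (- a + t * - d) * u (a + t * d))%C) => [t|].
  by rewrite /g neg.
have -> : (d * g' (a + s * d) = - d * cexp (- a + s * - d) * u (a + s * d)
                               + cexp (- a + s * - d) * (d * u1 (a + s * d)))%C.
  by rewrite /g' neg; ring.
exact: is_derive_RC_mult (is_derive_RC_cexp _ _ s) (is_derive_RC_ray _ _ _ _ _ (du _)).
Qed.

Lemma g'_ray (a d : C) s : is_derive_RC (fun t => g' (a + t * d))%C s
  (d * (c * pow_n (a + s * d)%C (k - 1) * g (a + s * d)))%C.
Proof.
have neg (t : R) : (- (a + t * d) = - a + t * - d)%C by ring.
apply: (is_derive_RC_ext (fun t => cexp (- a + t * - d) * (u1 (a + t * d) - u (a + t * d)))%C).
  by move=> t; rewrite /g' neg.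
set z := (a + s * d)%C.
have -> : (d * (c * pow_n z (k - 1) * g z) = - d * cexp (- a + s * - d) * (u1 z - u z)
                          + cexp (- a + s * - d) * (d * u2 z - d * u1 z))%C.
  apply/Ceq_minus; rewrite /g neg.
  transitivity (- d * cexp (- a + s * - d) * (u2 z - 2 * u1 z + (1 - c * pow_n z (k - 1)) * u z))%C.
    by ring.
  by rewrite ode Cmult_0_r.
apply: is_derive_RC_mult (is_derive_RC_cexp _ _ s) _.
exact: is_derive_RC_minus (is_derive_RC_ray _ _ _ _ _ (du1 _)) (is_derive_RC_ray _ _ _ _ _ (du _)).
Qed.

Lemma g_0 : g (RtoC 0) = RtoC (-1).
Proof. by rewrite /g Copp_0 cexp_0 u_0 Cmult_1_l. Qed.

Lemma g'_0 : g' (RtoC 0) = RtoC 1.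
Proof. by rewrite /g' Copp_0 cexp_0 u_0 u1_0 Cmult_1_l; apply/Ceq_minus; ring. Qed.

Lemma g'_increment_le r w M s0 : Cmod w <= r -> 0 <= s0 ->
  (forall s, 0 <= s <= s0 -> Cmod (g (0 + s * w)) <= M) ->
  Cmod (g' (0 + s0 * w) - 1) <= 2 * (c * r ^ k / INR k) * M * s0 ^ k.
Proof.
move=> w_le s0_ge0 g_le.
have k_pos : 0 < INR k by apply: lt_0_INR; lia.
have k_eq : S (k - 1) = k by lia.
have := Cmod_increment_le_pow (fun t => g' (0 + t * w))%C
  (fun s => w * (c * pow_n (0 + s * w)%C (k - 1) * g (0 + s * w)))%C
  (c * r ^ k * M) (k - 1) s0 s0_ge0 (g'_ray 0 w).
rewrite k_eq (_ : 0 + 0 * w = 0)%C ?g'_0; last by ring.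
move=> H; apply: Rle_trans (H _) (Req_le _ _ _); last by field; lra.
move=> s s_in; move: (g_le s s_in); move: (g (0 + s * w)%C) => G G_le.
have w_pow : Cmod w * Cmod w ^ (k - 1) <= r ^ k.
  rewrite -[X in r ^ X]k_eq /=; have := Cmod_ge_0 w => w_ge0.
  by apply: Rmult_le_compat => //; [apply: pow_le | apply: pow_incr].
rewrite !Cmod_mult Cmod_R Rabs_pos_eq // Cmod_pow_n Cplus_0_l Cmod_mult Cmod_R.
rewrite Rabs_pos_eq; last lra.
have wG : Cmod w * Cmod w ^ (k - 1) * Cmod G <= r ^ k * M.
  apply: Rmult_le_compat => //; last exact: Cmod_ge_0.
  exact: Rmult_le_pos (Cmod_ge_0 w) (pow_le _ _ (Cmod_ge_0 w)).
have cs : 0 <= c * s ^ (k - 1) by apply: Rmult_le_pos => //; apply: pow_le; lra.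
rewrite Rpow_mult_distr; nra.
Qed.

Lemma g_increment_le r w M s0 : Cmod w <= r -> 0 <= s0 ->
  (forall s, 0 <= s <= s0 -> Cmod (g (0 + s * w)) <= M) ->
  Cmod (g (0 + s0 * w) - (s0 * w - 1)) <= 4 * r * (c * r ^ k / INR k) * M * s0 ^ S k / INR (S k).
Proof.
move=> w_le s0_ge0 g_le.
have k_pos : 0 < INR k by apply: lt_0_INR; lia.
have k1_pos : 0 < INR (S k) by apply: lt_0_INR; lia.
have := Cmod_increment_le_pow (fun t => g (0 + t * w) - (t * w - 1))%C
  (fun s => w * g' (0 + s * w) - (w - 0))%C (2 * r * (c * r ^ k / INR k) * M) k s0 s0_ge0.
rewrite (_ : 0 + 0 * w = 0)%C ?g_0; last by ring.
rewrite (_ : forall x, x - (RtoC (-1) - (0 * w - 1)) = x)%C; last by move=> x; ring.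
move=> H; apply: Rle_trans (H _ _) (Req_le _ _ _); last by field; lra.
- move=> s; apply: is_derive_RC_minus (g_ray 0 w s) _.
  exact: is_derive_RC_minus (is_derive_RC_scal w s) (is_derive_RC_const 1 s).
move=> s s_in.
rewrite (_ : w * g' (0 + s * w) - (w - 0) = w * (g' (0 + s * w) - 1))%C; last by ring.
rewrite Cmod_mult (_ : 2 * r * _ * M * s ^ k = r * (2 * (c * r ^ k / INR k) * M * s ^ k));
  last by ring.
apply: Rmult_le_compat w_le (g'_increment_le r w M s w_le (proj1 s_in) _); try exact: Cmod_ge_0.
by move=> t t_in; apply: g_le; lra.
Qed.

Lemma c_pow_div_ge0 r : 0 <= r -> 0 <= c * r ^ k / INR k.
Proof.
move=> r_ge0; apply: Rdiv_le_0_compat; last by apply: lt_0_INR; lia.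
by apply: Rmult_le_pos => //; apply: pow_le.
Qed.

Lemma g_ray_bounded r w : 0 <= r <= 2 -> Cmod w <= r -> c * r ^ k / INR k <= / 48 ->
  forall s, 0 <= s <= 1 -> Cmod (g (0 + s * w)) <= 6.
Proof.
move=> r_bds w_le theta_le; set theta := c * r ^ k / INR k in theta_le *.
have theta_ge0 : 0 <= theta by apply: c_pow_div_ge0; lra.
have [s_max [g_le s_max_in]] := continuity_ab_maj (fun s => Cmod (g (0 + s * w))) 0 1 Rle_0_1
  (fun s _ => is_derive_RC_continuity_Cmod _ _ _ (g_ray 0 w s)).
set M := Cmod (g (0 + s_max * w)%C) in g_le *.
suff : M <= 6 by move=> M_le s s_in; apply: Rle_trans (g_le s s_in) M_le.
have M_ge0 : 0 <= M by exact: Cmod_ge_0.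
have near_line : Cmod (s_max * w - 1)%C <= 3.
  apply: Rle_trans (Cmod_triangle _ _) _.
  rewrite Cmod_opp Cmod_1 Cmod_mult Cmod_R Rabs_pos_eq; [nra | lra].
have off_line := g_increment_le r w M s_max w_le (proj1 s_max_in) (fun s s_in => g_le s ltac:(lra)).
rewrite -/theta in off_line.
have small : 4 * r * theta * M * s_max ^ S k / INR (S k) <= M / 2.
  have k1_ge1 : 1 <= INR (S k) by rewrite S_INR; have := pos_INR k; lra.
  have s_pow : s_max ^ S k <= 1 by rewrite -(pow1 (S k)); apply: pow_incr; lra.
  have r_theta : r * theta <= / 24 by nra.
  have := pow_le _ (S k) (proj1 s_max_in) => s_pow_ge0.
  have r_theta_M : 0 <= r * theta * M by apply: Rmult_le_pos => //; apply: Rmult_le_pos; lra.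
  have small_M : r * theta * M * s_max ^ S k <= M / 24 by nra.
  apply Rle_div_l; nra.
have := Cmod_triangle (s_max * w - 1)%C (g (0 + s_max * w) - (s_max * w - 1))%C.
rewrite (_ : s_max * w - 1 + (g (0 + s_max * w) - (s_max * w - 1)) = g (0 + s_max * w))%C;
  last by ring.
rewrite -/M; lra.
Qed.

Lemma ray_estimates r w : 0 <= r <= 2 -> Cmod w <= r -> c * r ^ k / INR k <= / 48 ->
  Cmod (g w - (w - 1)) <= 48 * (c * r ^ k / INR k) / INR (S k) /\
  Cmod (g' w - 1) <= 12 * (c * r ^ k / INR k).
Proof.
move=> r_bds w_le theta_le; have g_le := g_ray_bounded r w r_bds w_le theta_le.
have k1_pos : 0 < INR (S k) by apply: lt_0_INR; lia.
have := g'_increment_le r w 6 1 w_le Rle_0_1 g_le.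
have := g_increment_le r w 6 1 w_le Rle_0_1 g_le.
have w0 : (0 + 1 * w = w)%C by ring.
have w1 : (1 * w = w)%C by ring.
rewrite w0 w1 !pow1.
have := c_pow_div_ge0 r (proj1 r_bds); set theta := c * r ^ k / INR k => theta_ge0 g_near g'_near.
split; last lra.
apply: Rle_trans g_near _; apply: Rmult_le_compat_r; last nra.
exact: Rlt_le (Rinv_0_lt_compat _ k1_pos).
Qed.

Lemma u_zeros_unique r : 0 <= r <= 2 -> c * r ^ k / INR k <= / 48 -> 3 * c / INR k <= / 48 ->
  forall z1 z2, u z1 = RtoC 0 -> u z2 = RtoC 0 -> Cmod z1 <= r -> Cmod z2 <= r -> z1 = z2.
Proof.
move=> r_bds theta_le c_le z1 z2 u_z1 u_z2 z1_le z2_le.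
have k_pos : 0 < INR k by apply: lt_0_INR; lia.
have k1_pos : 0 < INR (S k) by apply: lt_0_INR; lia.
set eta := 48 * (c * r ^ k / INR k) / INR (S k).
have eta_bds : 0 <= eta <= / INR (S k).
  have := c_pow_div_ge0 r (proj1 r_bds); have := Rinv_0_lt_compat _ k1_pos.
  move: theta_le; rewrite /eta /Rdiv; set theta := c * r ^ k * / INR k.
  move=> theta_le inv_pos theta_ge0.
  split; first by apply: Rmult_le_pos; lra.
  by rewrite -[X in _ <= X]Rmult_1_l; apply: Rmult_le_compat_r; lra.
have zero_near z : u z = RtoC 0 -> Cmod z <= r -> Cmod (z - 1) <= eta.
  move=> u_z z_le; have [] := ray_estimates r z r_bds z_le theta_le.
  by rewrite /g u_z Cmult_0_r (_ : 0 - (z - 1) = - (z - 1))%C ?Cmod_opp //; ring.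
apply: (near_identity_injective g g' 1 eta (/ 4) g_ray) (zero_near _ u_z1 z1_le)
  (zero_near _ u_z2 z2_le) _; [lra | | by rewrite /g u_z1 u_z2 !Cmult_0_r].
move=> w w_near.
have w_le : Cmod w <= 1 + eta.
  have := Cmod_triangle (w - 1) 1; rewrite Cmod_1 (_ : w - 1 + 1 = w)%C; [lra | ring].
have eta_pow : (1 + eta) ^ k <= 3.
  apply: Rle_trans (pow_le_exp _ _ _) _; first lra.
  apply: Rle_trans (Rlt_le _ _ (exp_increasing _ 1 _)) exp_le_3.
  have : INR k * / INR (S k) < 1 by rewrite S_INR; apply/Rlt_div_l; lra.
  have := pos_INR k; nra.
have theta'_le : c * (1 + eta) ^ k / INR k <= / 48.
  apply: Rle_trans _ c_le; apply: Rmult_le_compat_r; last nra.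
  exact: Rlt_le (Rinv_0_lt_compat _ k_pos).
have eta_le1 : / INR (S k) <= 1.
  by rewrite -Rinv_1; apply: Rinv_le_contravar; [lra | rewrite S_INR; have := pos_INR k; lra].
have [_ g'_near] := ray_estimates (1 + eta) w ltac:(lra) w_le theta'_le.
lra.
Qed.
End DampedSolution.

Lemma ln_le_half x : 0 < x -> ln x <= x / 2.
Proof.
move=> x_pos; rewrite -[X in _ <= X]ln_exp; apply: ln_le => //.
have -> : exp (x / 2) = exp (x / 4) * exp (x / 4) by rewrite -exp_plus; f_equal; field.
have := exp_ineq1_le (x / 4) => exp_ge.
have : (1 + x / 4) * (1 + x / 4) <= exp (x / 4) * exp (x / 4) by apply: Rmult_le_compat; lra.
have := pow2_ge_0 (x / 4 - 1); nra.
Qed.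

Lemma Rpower_INR_eventually_ge d M : 0 < d -> 0 < M ->
  exists N, forall k, (N <= k)%nat -> M <= Rpower (INR k) d.
Proof.
move=> d_pos M_pos; have [N N_gt] := INR_unbounded (Rpower M (/ d)).
exists N => k k_ge.
have -> : M = Rpower (Rpower M (/ d)) d by rewrite Rpower_mult Rinv_l ?Rpower_1 //; lra.
apply: Rle_Rpower_l; first lra.
by split; [exact: exp_pos | apply: Rle_trans (Rlt_le _ _ N_gt) (le_INR _ _ k_ge)].
Qed.

Lemma outer_radius_bounds (d c : R) (k : nat) :
  0 <= d <= 2 -> (2 <= k)%nat -> 192 <= Rpower (INR k) d -> 0 <= c <= 2 / (INR k - 1) ->
  let r := 1 + (2 - d) * ln (INR k) / INR k in 0 <= r <= 2 /\ c * r ^ k / INR k <= / 48.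
Proof.
move=> d_bds k_ge2 kd_ge c_bds r.
have k_ge : 2 <= INR k by apply: (le_INR 2).
have ln_ge0 : 0 <= ln (INR k) by rewrite -ln_1; apply: ln_le; lra.
have := ln_le_half (INR k) ltac:(lra) => ln_le_k.
have x_bds : 0 <= (2 - d) * ln (INR k) / INR k <= 1.
  split; first by apply: Rdiv_le_0_compat; nra.
  apply Rle_div_l; nra.
have r_bds : 0 <= r <= 2 by rewrite /r; lra.
split=> //.
set P := Rpower (INR k) d in kd_ge.
have r_pow : r ^ k * P <= INR k ^ 2.
  have sq : Rpower (INR k) 2 = INR k ^ 2 by rewrite -Rpower_pow; [simpl; f_equal; ring | lra].
  have := Rpower_plus (2 - d) d (INR k); rewrite Rplus_comm Rplus_minus sq -/P => split_pow.
  have := exp_pos ((2 - d) * ln (INR k)); have P_pos : 0 < P by exact: exp_pos.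
  have : r ^ k <= Rpower (INR k) (2 - d).
    apply: Rle_trans (pow_le_exp _ _ _) (Req_le _ _ _); first lra.
    by rewrite /Rpower; f_equal; field; lra.
  nra.
have c_k : c * (INR k - 1) <= 2 by apply (Rle_div_r c 2 (INR k - 1)); lra.
have r_pow_ge0 : 0 <= r ^ k by apply: pow_le; lra.
have : c * r ^ k * (INR k - 1) * P <= 2 * INR k ^ 2.
  rewrite (_ : c * r ^ k * (INR k - 1) * P = (c * (INR k - 1)) * (r ^ k * P)); last ring.
  by apply: Rmult_le_compat => //; [nra | apply: Rmult_le_pos; lra].
have : 0 <= c * r ^ k * (INR k - 1) by apply: Rmult_le_pos; nra.
move=> X_ge0 X_le; have {X_le} : c * r ^ k * (INR k - 1) * 192 <= 2 * INR k ^ 2.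
  by have := Rmult_le_compat_l _ _ _ X_ge0 kd_ge; lra.
set X := c * r ^ k => X_le; apply Rle_div_l; first lra.
have : X * (INR k - 1) <= INR k * (INR k - 1) / 48 by nra.
by move=> X_k; apply: (Rmult_le_reg_r (INR k - 1)); lra.
Qed.

Theorem lemma3p4 :
  forall delta : R, 0 < delta ->
  exists K : nat, forall t : btree, (K <= bsize t)%nat ->
  let k := bsize t in
  (* w(t) = l(t)/k! *)
  let w := INR (nlabelings t) / INR (fact k) in
  forall u u1 u2 : C -> C,
    (* u is entire with u' = u1, u'' = u2 (complex derivatives) *)
    (forall z : C, is_derive u z (u1 z)) ->
    (forall z : C, is_derive u1 z (u2 z)) ->
    (* u'' - 2u' + (1 - w(t) k z^(k-1)) u = 0, u(0) = -1, u'(0) = 0 *)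
    (forall z : C,
        Cplus (Cminus (u2 z) (Cmult (RtoC 2) (u1 z)))
              (Cmult (Cminus (RtoC 1) (Cmult (RtoC (w * INR k)) (pow_n z (k - 1)%nat))) (u z))
        = RtoC 0) ->
    u (RtoC 0) = RtoC (-1) ->
    u1 (RtoC 0) = RtoC 0 ->
    (* rho~ = smallest positive zero of u *)
    forall rho : R, 0 < rho -> u (RtoC rho) = RtoC 0 ->
    (forall x : R, 0 < x < rho -> u (RtoC x) <> RtoC 0) ->
    (* S_t = -u'/u has no singularity, i.e. u has no zero, in the annulus *)
    forall z : C,
      rho < Cmod z < 1 + (2 - delta) * ln (INR k) / INR k ->
      u z <> RtoC 0.
Proof.
move=> delta delta_pos; set d := Rmin delta 1.
have d_bds : 0 < d <= 1 by split; [apply: Rmin_glb_lt; lra | apply: Rmin_r].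
have d_le : d <= delta by apply: Rmin_l.
have [N N_ge] := Rpower_INR_eventually_ge d 192 (proj1 d_bds) ltac:(lra).
exists (Nat.max 18 N) => t t_ge k w u u1 u2 du du1 ode u_0 u1_0 rho rho_pos u_rho _.
move=> z [rho_lt z_lt].
have kR : 18 <= INR k by rewrite INR_IZR_INZ; apply: IZR_le; lia.
have := labeling_weight_bounds t ltac:(lia); rewrite -/k -/w => c_bds.
have [r_bds theta_le] :=
  outer_radius_bounds d (w * INR k) k ltac:(lra) ltac:(lia) (N_ge k ltac:(lia)) c_bds.
have c_le : 3 * (w * INR k) / INR k <= / 48.
  have := proj2 c_bds; rewrite -Rle_div_r; last lra.
  move=> c_k; apply Rle_div_l; nra.
have ln_ge0 : 0 <= ln (INR k) by rewrite -ln_1; apply: ln_le; lra.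
have z_le : Cmod z <= 1 + (2 - d) * ln (INR k) / INR k.
  suff : (2 - delta) * ln (INR k) / INR k <= (2 - d) * ln (INR k) / INR k by lra.
  apply: Rmult_le_compat_r; first by apply/Rlt_le/Rinv_0_lt_compat; lra.
  by apply: Rmult_le_compat_r; lra.
move=> u_z; have := u_zeros_unique u u1 u2 (w * INR k) k du du1 ode u_0 u1_0 (proj1 c_bds)
  ltac:(lia) _ r_bds theta_le c_le z rho u_z u_rho z_le.
rewrite Cmod_R Rabs_pos_eq; last lra.
by move=> /(_ ltac:(lra)) z_rho; move: rho_lt; rewrite z_rho Cmod_R Rabs_pos_eq; lra.
Qed.
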